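(* Let $\Gamma$ be a graph of order $n$, minimum degree $\delta>0$ and maximum degree $\Delta\ge 2$. For every integer $j\in\{2-\Delta,\dots,0\}$ and every integer $k\le-\frac{j\delta}{\Delta}$, we have $\gamma_k^o(\Gamma)+\gamma_j^o(\Gamma)\le n$.
   Context: Graphs are finite and simple. For $S\subseteq V$ and $v\in V$, $\delta_S(v)$ is the number of neighbours of $v$ in $S$, $\overline{S}=V\setminus S$, and $\partial(S)$ the set of vertices of $\overline{S}$ with a neighbour in $S$. A nonempty $S$ is an offensive $k$-alliance if $\delta_S(v)\ge\delta_{\overline{S}}(v)+k$ for all $v\in\partial(S)$, and a global offensive $k$-alliance if moreover it is dominating. $\gamma_k^o(\Gamma)$ denotes the minimum cardinality of a global offensive $k$-alliance in $\Gamma$. *)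

From mathcomp Require Import all_boot all_order all_algebra.
Set Implicit Arguments. Unset Strict Implicit. Unset Printing Implicit Defensive.
Import Order.TTheory GRing.Theory Num.Theory.

Definition simple_graph (T : finType) (e : rel T) : Prop :=
  symmetric e /\ irreflexive e.

Section Alliances.
Variables (T : finType) (e : rel T).

Definition deg (v : T) : nat := #|[set u | e v u]|.

Definition deltaS (S : {set T}) (v : T) : nat := #|[set u in S | e v u]|.

Definition boundary (S : {set T}) : {set T} :=
  [set v in ~: S | [exists u in S, e v u]].

Definition offensive_alliance (k : int) (S : {set T}) : bool :=
  (S != set0) &&
  [forall v in boundary S, ((deltaS S v)%:Z >= (deltaS (~: S) v)%:Z + k)%R].

Definition dominating (S : {set T}) : bool :=
  [forall v in ~: S, [exists u in S, e v u]].

Definition global_offensive_alliance (k : int) (S : {set T}) : bool :=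
  offensive_alliance k S && dominating S.

(* gamma_k^o: minimum cardinality of a global offensive k-alliance.
   Since [set: T] is one whenever T is nonempty, the default #|T| is harmless. *)
Definition gamma_o (k : int) : nat :=
  \big[minn/#|T|]_(S : {set T} | global_offensive_alliance k S) #|S|.

End Alliances.

(* Give every vertex the weight w v = max(j, 1 - deg v) and pick S maximising
   the number of edges between S and its complement plus the total weight of S.
   Moving a single vertex across the cut cannot increase this potential, which
   says exactly that every vertex outside S has at least w v more neighbours in S
   than outside, and every vertex of S at most w v more neighbours in S than
   outside. Since j <= w v <= -k and 1 - deg v <= w v <= deg v - 1, the set S is a
   global offensive j-alliance and its complement a global offensive k-alliance,
   so gamma_k + gamma_j <= |S| + |~S| = n. The bounds on j and k enter only
   through j + k <= 0 and max(j, k) < mindeg. *)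

From mathcomp Require Import all_boot all_order all_algebra.
From mathcomp Require Import zify ring.
Import Order.TTheory GRing.Theory Num.Theory.
Set Implicit Arguments. Unset Strict Implicit. Unset Printing Implicit Defensive.

Lemma gamma_o_le_card (T : finType) (e : rel T) k S :
  global_offensive_alliance e k S -> (gamma_o e k <= #|S|)%N.
Proof.
by move=> kS; rewrite /gamma_o -minEnat; exact: (bigmin_le_cond _ (fun A : {set T} => #|A|) kS).
Qed.

Section CutPotential.
Variables (T : finType) (e : rel T).
Hypotheses (e_sym : symmetric e) (e_irr : irreflexive e).
Local Open Scope ring_scope.

Lemma deg_split (S : {set T}) v : deg e v = (deltaS e S v + deltaS e (~: S) v)%N.
Proof.
rewrite /deg /deltaS -(cardsID S [set u | e v u]).
by congr (_ + _)%N; apply: eq_card => u; rewrite !inE andbC.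
Qed.

Lemma deltaS_sum (S : {set T}) v : (deltaS e S v)%:Z = \sum_(u in S) (e v u : nat)%:Z.
Proof.
rewrite /deltaS -sum1_card -natz natr_sum big_mkcond [RHS]big_mkcond /=.
by apply: eq_bigr => u _; rewrite inE; case: (u \in S); case: (e v u).
Qed.

Lemma deltaS_setU1 (S : {set T}) v : deltaS e (v |: S) v = deltaS e S v.
Proof.
apply: eq_card => u; rewrite !inE.
by case: (u =P v) => [->|] //; rewrite e_irr !andbF.
Qed.

Lemma deltaS_setD1 (S : {set T}) v : deltaS e (S :\ v) v = deltaS e S v.
Proof.
apply: eq_card => u; rewrite !inE.
by case: (u =P v) => [->|] //; rewrite e_irr !andbF.
Qed.

Definition cut (S : {set T}) : int :=
  \sum_(u in S) \sum_(x in ~: S) (e u x : nat)%:Z.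

Lemma cut_setU1 (S : {set T}) v : v \notin S ->
  cut (v |: S) = cut S + (deltaS e (~: S) v)%:Z - (deltaS e S v)%:Z.
Proof.
move=> vNS.
have CS : ~: S = v |: ~: (v |: S).
  by apply/setP => x; rewrite !inE; case: (x =P v) => [->|].
have vNC : v \notin ~: (v |: S) by rewrite !inE eqxx.
have edges_v : \sum_(x in ~: S) (e v x : nat)%:Z
             = \sum_(x in ~: (v |: S)) (e v x : nat)%:Z.
  by rewrite CS big_setU1 //= e_irr add0r.
rewrite /cut big_setU1 //= [in RHS]CS.
under [in RHS]eq_bigr do rewrite big_setU1 //=.
rewrite -CS big_split /= !deltaS_sum edges_v.
under [in RHS]eq_bigr do rewrite e_sym.
ring.
Qed.

Variable w : T -> int.

Definition potential (S : {set T}) : int := cut S + \sum_(u in S) w u.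

Lemma potential_setU1 (S : {set T}) v : v \notin S ->
  potential (v |: S)
  = potential S + ((deltaS e (~: S) v)%:Z - (deltaS e S v)%:Z + w v).
Proof. by move=> vNS; rewrite /potential cut_setU1 // big_setU1 //=; ring. Qed.

Definition balanced (S : {set T}) : Prop :=
  (forall v, v \notin S -> (deltaS e (~: S) v)%:Z + w v <= (deltaS e S v)%:Z) /\
  (forall v, v \in S -> (deltaS e S v)%:Z <= (deltaS e (~: S) v)%:Z + w v).

(* A maximiser of the potential is balanced: moving one vertex across the cut
   changes the potential by the margin in [potential_setU1]. *)
Lemma exists_balanced : exists S, balanced S.
Proof.
case: (@arg_maxP _ _ _ set0 predT potential erefl) => S _ S_max.
exists S; split=> v.
  move=> vNS; have := S_max (v |: S) erefl.
  rewrite potential_setU1 //; lia.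
move=> vS; have vND : v \notin S :\ v by rewrite !inE eqxx.
have := S_max (S :\ v) erefl.
rewrite -{1}(setD1K vS) potential_setU1 // setCD setUC.
rewrite deltaS_setU1 deltaS_setD1; lia.
Qed.

Lemma global_offensive_allianceI k (S : {set T}) (x : T) :
  (forall v, v \notin S ->
     (0 < deltaS e S v)%N /\ (deltaS e (~: S) v)%:Z + k <= (deltaS e S v)%:Z) ->
  global_offensive_alliance e k S.
Proof.
move=> margin.
have neighbour_in v : v \notin S -> [exists u in S, e v u].
  case/margin=> + _; rewrite card_gt0 => /set0Pn [u].
  by rewrite inE => /andP [uS evu]; apply/existsP; exists u; rewrite uS.
apply/andP; split; [apply/andP; split|].
- apply/set0Pn; case: (boolP (x \in S)) => [|/neighbour_in /existsP [u]];
  first by exists x.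
  by case/andP; exists u.
- apply/forallP => v; apply/implyP; rewrite !inE => /andP [vNS _].
  by case: (margin v vNS).
- by apply/forallP => v; apply/implyP; rewrite inE; apply: neighbour_in.
Qed.

Lemma balanced_alliance j (S : {set T}) (x : T) : balanced S ->
  (forall v, j <= w v /\ 1 - (deg e v)%:Z <= w v) ->
  global_offensive_alliance e j S.
Proof.
move=> [out_margin _] w_ge; apply: (global_offensive_allianceI x) => v vNS.
have := out_margin v vNS; have := w_ge v; rewrite (deg_split S v); lia.
Qed.

Lemma balanced_alliance_compl k (S : {set T}) (x : T) : balanced S ->
  (forall v, w v <= - k /\ w v <= (deg e v)%:Z - 1) ->
  global_offensive_alliance e k (~: S).
Proof.
move=> [_ in_margin] w_le; apply: (global_offensive_allianceI x) => v.
rewrite inE negbK setCK => vS.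
have := in_margin v vS; have := w_le v; rewrite (deg_split S v); lia.
Qed.

End CutPotential.

Theorem gamma_o_add_le_card (T : finType) (e : rel T) (x : T) (j k : int) :
  simple_graph e -> (j + k <= 0)%R ->
  (forall v, (0 < deg e v)%N /\ (Num.max j k < (deg e v)%:Z)%R) ->
  (gamma_o e k + gamma_o e j <= #|T|)%N.
Proof.
move=> [e_sym e_irr] jk_le0 deg_gt.
pose w v : int := Num.max j (1 - (deg e v)%:Z)%R.
have [S S_bal] := exists_balanced e_sym e_irr w.
have w_ge v : (j <= w v /\ 1 - (deg e v)%:Z <= w v)%R by rewrite !le_max !lexx orbT.
have w_le v : (w v <= - k /\ w v <= (deg e v)%:Z - 1)%R.
  by have := deg_gt v; rewrite /w !ge_max gt_max; lia.
have := gamma_o_le_card (balanced_alliance x S_bal w_ge).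
have := gamma_o_le_card (balanced_alliance_compl x S_bal w_le).
have := cardsC S; lia.
Qed.

Theorem mainTheorem6 (T : finType) (e : rel T) (mindeg maxdeg : nat) (j k : int) :
  simple_graph e ->
  (forall v, mindeg <= deg e v)%N -> (exists v, deg e v = mindeg) ->
  (forall v, deg e v <= maxdeg)%N -> (exists v, deg e v = maxdeg) ->
  (0 < mindeg)%N -> (2 <= maxdeg)%N ->
  (2%:Z - maxdeg%:Z <= j)%R -> (j <= 0)%R ->
  ((k%:~R : rat) <= - (j%:~R * mindeg%:R) / maxdeg%:R)%R ->
  (gamma_o e k + gamma_o e j <= #|T|)%N.
Proof.
move=> G mindeg_le [x _] _ [y degy] mindeg_gt0 maxdeg_ge2 j_ge j_le0 k_bound.
have k_le : (k * maxdeg%:Z <= - (j * mindeg%:Z))%R.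
  rewrite ler_pdivlMr ?ltr0n in k_bound; last by lia.
  by rewrite -(ler_int rat) !rmorphM /= rmorphN rmorphM.
have mindeg_le_maxdeg : (mindeg <= maxdeg)%N by rewrite -degy.
apply: (gamma_o_add_le_card x G); first by nia.
move=> v; have := mindeg_le v; rewrite gt_max; nia.
Qed.
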